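(* For nonzero integers $n$ define $r(n)=\prod_{p\mid n\text{ prime}}\frac{-p^{4-3\operatorname{ord}_p(n)}}{p^3-p-1}$, and let $S=\prod_{p\text{ prime}}(1-p/(p^3-1))$. For $n\ge1$ put $$S_{1,n}=\sum_{i\ge1}\sum_{\substack{j\ge1\\ n\mid ij}}\frac{\mu(j)}{i^2j\varphi(ij)},\qquad S'_{2,n}=\sum_{\substack{i\ge1\\ 2\mid i}}\ \sum_{\substack{j\ge1\\ n\mid ij}}\frac{\mu(j)}{i^2j\,\varphi(ij)}.$$ Then $S_{1,n}=r(n)S$, and $S'_{2,n}=\frac{3}{10}r(n)S$ if $n$ is odd, while $S'_{2,n}=r(n)S$ if $4\mid n$.
   Context: $\mu$ is the Möbius function, $\varphi$ Euler's totient function, and $\operatorname{ord}_p(n)$ the exponent of the prime $p$ in $n$. *)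

From HB Require Import structures.
From mathcomp Require Import all_boot all_order all_algebra.
From mathcomp Require Import all_classical all_reals all_analysis.
Set Implicit Arguments. Unset Strict Implicit. Unset Printing Implicit Defensive.
Import Order.TTheory GRing.Theory Num.Theory.
Local Open Scope ring_scope.

(* Moebius function: mu(n) = (-1)^(number of prime factors) if n >= 1 is
   squarefree, 0 otherwise (mu 0 := 0, never used). *)
Definition mobius (n : nat) : int :=
  if (0 < n)%N && all (fun p => logn p n == 1%N) (primes n)
  then (-1) ^+ size (primes n) else 0.

Definition r_fun (R : realType) (n : nat) : R :=
  \prod_(p <- primes n)
     (- ((p%:R : R) ^ (4%:Z - 3%:Z * (logn p n)%:Z)) / ((p%:R : R) ^+ 3 - p%:R - 1)).

Definition S_const (R : realType) : R :=
  limn (fun N : nat => \prod_(p < N | prime p) (1 - (p%:R : R) / ((p%:R : R) ^+ 3 - 1))).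

Definition term (R : realType) (i j : nat) : R :=
  (mobius j)%:~R / ((i ^ 2 * j * totient (i * j))%N%:R).

Definition S1 (R : realType) (n : nat) : R :=
  limn (fun N : nat => \sum_(1 <= i < N)
    limn (fun M : nat => \sum_(1 <= j < M | (n %| i * j)%N) term R i j)).

Definition S2' (R : realType) (n : nat) : R :=
  limn (fun N : nat => \sum_(1 <= i < N | (2 %| i)%N)
    limn (fun M : nat => \sum_(1 <= j < M | (n %| i * j)%N) term R i j)).

From HB Require Import structures.
From mathcomp Require Import all_boot all_order all_algebra.
From mathcomp Require Import all_classical all_reals all_analysis.
From mathcomp Require Import ring lra zify.
Import Order.TTheory GRing.Theory Num.Theory.
Import numFieldNormedType.Exports.
Local Open Scope ring_scope.
Local Open Scope classical_set_scope.

(* For fixed n and i the summand [n | ij] mu(j) / (i^2 j phi(ij)) is a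
   multiplicative function of j, and its local sums at p are bounded by
   1 + 2/p^2 in absolute value, so the sum over j is the Euler product of its
   local factors.  Dividing by the local factor alpha_p at primes p not dividing
   n i, the inner sum is (prod_p alpha_p) h(i) with h multiplicative, and the
   sum over i is again an Euler product.  Its local factor at p is a geometric
   series, equal to (1 - p/(p^3-1)) r_p(n) / alpha_p, whence S_{1,n} = r(n) S.
   Restricting to even i only drops the term with ord_2(i) = 0 from the
   local factor at 2: for odd n this leaves 3/10 of it, and for 4 | n that term
   vanishes. *)

Section BigPrimes.
Variables (T : Type) (idx : T) (op : Monoid.com_law idx).

Lemma big_prime_ord_primes (m N : nat) (H : nat -> T) :
  (0 < m)%N -> (forall p, prime p -> (p %| m)%N -> (p < N)%N) ->
  (forall p, prime p -> ~~ (p %| m)%N -> H p = idx) ->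
  \big[op/idx]_(p < N | prime p) H p = \big[op/idx]_(p <- primes m) H p.
Proof.
move=> m0 ltpN Hidx.
rewrite (bigID (fun p : 'I_N => (p : nat) \in primes m)) /=.
rewrite [X in op _ X]big1 ?Monoid.mulm1; last first.
  move=> i /andP[pi ni]; apply: Hidx => //.
  by move: ni; rewrite mem_primes pi m0.
rewrite -(big_mkord (fun p => prime p && (p \in primes m))) -big_filter.
apply: perm_big; apply: uniq_perm.
- by apply: filter_uniq; apply: iota_uniq.
- exact: primes_uniq.
move=> p; rewrite mem_filter mem_index_iota /=.
case pm: (p \in primes m); rewrite ?andbF //=.
move: pm; rewrite mem_primes => /and3P[pp _ pd].
by rewrite pp /= ltpN.
Qed.

Lemma big_prime_ord_widen (M N1 N2 : nat) (H : nat -> T) :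
  (forall p, prime p -> (M <= p)%N -> H p = idx) ->
  (M <= N1)%N -> (M <= N2)%N ->
  \big[op/idx]_(p < N1 | prime p) H p = \big[op/idx]_(p < N2 | prime p) H p.
Proof.
move=> Hidx leMN1 leMN2.
suff E : forall N, (M <= N)%N ->
  \big[op/idx]_(p < N | prime p) H p = \big[op/idx]_(p < M | prime p) H p.
  by rewrite E // E.
move=> N leMN.
rewrite -!(big_mkord (fun p => prime p)) (big_cat_nat (leq0n M) leMN) /=.
rewrite [X in op _ X]big1_seq ?Monoid.mulm1 // => i /andP[pi].
by rewrite mem_index_iota => /andP[leMi _]; apply: Hidx.
Qed.

End BigPrimes.

Section PrimeFactorization.
Local Open Scope nat_scope.

Lemma prod_prime_ord_logn (m N : nat) : 0 < m ->
  (forall p, prime p -> p %| m -> p < N) ->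
  m = \prod_(p < N | prime p) p ^ logn p m.
Proof.
move=> m0 ltpN.
rewrite (@big_prime_ord_primes _ 1 muln m N (fun p => p ^ logn p m)) //.
- by rewrite {1}[m]prod_prime_decomp // prime_decompE big_map.
- by move=> p pp ndvd; rewrite logn_coprime ?expn0 // prime_coprime.
Qed.

Definition totient_local (p k : nat) : nat :=
  if k is k'.+1 then p.-1 * p ^ k' else 1.

Lemma totient_local_gt0 p k : 1 < p -> 0 < totient_local p k.
Proof.
by move=> p1; case: k => //= k; rewrite muln_gt0 expn_gt0 -subn1 subn_gt0 p1 ltnW.
Qed.

Lemma totient_prime_ord (m N : nat) : 0 < m ->
  (forall p, prime p -> p %| m -> p < N) ->
  totient m = \prod_(p < N | prime p) totient_local p (logn p m).
Proof.
move=> m0 ltpN.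
rewrite (@big_prime_ord_primes _ 1 muln m N (fun p => totient_local p (logn p m))) //.
- rewrite totientE //; apply: eq_big_seq => p; rewrite -logn_gt0.
  by case: (logn p m).
- by move=> p pp ndvd; rewrite logn_coprime // prime_coprime.
Qed.

Lemma dvdn_lognP (n m : nat) : 0 < n -> 0 < m ->
  reflect (forall p, prime p -> logn p n <= logn p m) (n %| m).
Proof.
move=> n0 m0; apply: (iffP (dvdn_partP _ n0)) => H p.
- move=> pp; case: (posnP (logn p n)) => [-> //|].
  rewrite logn_gt0 => /H; rewrite p_part pfactor_dvdn //.
- rewrite mem_primes => /and3P[pp _ _].
  by rewrite p_part pfactor_dvdn // H.
Qed.

Lemma logn_prod p (I : finType) (F : I -> nat) : (forall i, 0 < F i) ->
  logn p (\prod_i F i) = \sum_i logn p (F i).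
Proof.
move=> F_gt0.
suff: logn p (\prod_i F i) = \sum_i logn p (F i) /\ 0 < \prod_i F i by case.
elim/big_rec2: _ => [|i b a _ [IH a0]]; first by rewrite logn1.
by rewrite lognM // ?IH // muln_gt0 F_gt0.
Qed.

Lemma logn_nonprime q m : ~~ prime q -> logn q m = 0.
Proof. by move=> qN; rewrite lognE (negbTE qN). Qed.

End PrimeFactorization.

Definition prime_ord (N : nat) : pred 'I_N := fun i => prime i.
Definition primes_below (N : nat) := {x in prime_ord N}.

Definition pexp_prod N K (f : {ffun primes_below N -> 'I_K}) : nat :=
  (\prod_(x : primes_below N) (val (val x)) ^ f x)%N.

Arguments pexp_prod {N K} f.

Lemma primes_below_prime N (x : primes_below N) : prime (val (val x)).
Proof. exact: (valP x). Qed.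

Lemma big_primes_below (R : comNzRingType) N (F : nat -> R) :
  \prod_(p < N | prime p) F p = \prod_(x : primes_below N) F (val (val x)).
Proof.
by rewrite -(big_sub (prime_ord N) (fun p : 'I_N => F p)); apply: eq_bigl.
Qed.

Section ExponentVectors.
Local Open Scope nat_scope.
Variables (N K : nat).
Implicit Types f : {ffun primes_below N -> 'I_K}.

Lemma pexp_prod_gt0 f : 0 < pexp_prod f.
Proof.
by apply: prodn_gt0 => x; rewrite expn_gt0 prime_gt0 ?primes_below_prime.
Qed.

Lemma logn_pexp_prod f q :
  logn q (pexp_prod f) = \sum_(x : primes_below N) f x * (q == val (val x)).
Proof.
rewrite /pexp_prod logn_prod; last first.
  by move=> x; rewrite expn_gt0 prime_gt0 ?primes_below_prime.
by apply: eq_bigr => x _; rewrite lognX logn_prime ?primes_below_prime.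
Qed.

Lemma logn_pexp_prod_val f (x : primes_below N) :
  logn (val (val x)) (pexp_prod f) = f x.
Proof.
rewrite logn_pexp_prod (bigD1 x) //= eqxx muln1 big1 ?addn0 // => y neq_yx.
rewrite (_ : (_ == _) = false) ?muln0 //; apply/negbTE.
by apply: contra neq_yx => /eqP eq_xy; apply/eqP; do 2 apply: val_inj.
Qed.

Lemma logn_pexp_prod_ge f q : N <= q -> logn q (pexp_prod f) = 0.
Proof.
move=> leNq; rewrite logn_pexp_prod big1 // => y _.
by rewrite gtn_eqF ?muln0 // (leq_trans (ltn_ord _) leNq).
Qed.

Lemma pexp_prod_inj : injective (@pexp_prod N K).
Proof.
move=> f1 f2 eq_f; apply/ffunP => x; apply: val_inj.
by rewrite /= -!(logn_pexp_prod_val _ x) eq_f.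
Qed.

Lemma pexp_prod_le f : pexp_prod f <= \prod_(x : primes_below N) (val (val x)) ^ K.
Proof.
apply: leq_prod => x _; apply: leq_pexp2l; first by rewrite prime_gt0 ?primes_below_prime.
exact: ltnW (ltn_ord _).
Qed.

End ExponentVectors.

Section EulerExpansion.
Variable R : numDomainType.

(* [gq p a] is the factor of [G] at [p] for [p]-adic valuation [a]; below [B]
   the factor [gq p 0] need not be [1], so products must run past [B]. *)
Definition euler_factors (B : nat) (G : nat -> R) (gq : nat -> nat -> R) :=
  (forall d N, (0 < d)%N -> (B <= N)%N -> (d < N)%N ->
     G d = \prod_(p < N | prime p) gq p (logn p d)) /\
  (forall p, prime p -> (B <= p)%N -> gq p 0%N = 1).

Lemma euler_factors_norm B G gq : euler_factors B G gq ->
  euler_factors B (fun d => `|G d|) (fun p a => `|gq p a|).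
Proof.
case=> G_mult gq0; split=> [d N d0 leBN ltdN | p pp leBp].
  by rewrite (G_mult d N) // normr_prod.
by rewrite gq0 // normr1.
Qed.

Lemma prod_local_sums_pexp B G gq N K : euler_factors B G gq -> (B <= N)%N ->
  \prod_(p < N | prime p) \sum_(a < K) gq p a =
  \sum_(f : {ffun primes_below N -> 'I_K}) G (pexp_prod f).
Proof.
move=> [G_mult gq0] leBN.
rewrite (big_primes_below _ _ (fun p => \sum_(a < K) gq p a)) bigA_distr_bigA /=.
apply: eq_bigr => f _.
pose N' := maxn N (pexp_prod f).+1.
rewrite (G_mult _ N') ?pexp_prod_gt0 ?leq_max ?leBN ?ltnSn ?orbT //.
rewrite (@big_prime_ord_widen R 1 *%R N N' N (fun p => gq p (logn p (pexp_prod f)))).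
- rewrite (big_primes_below _ _ (fun p => gq p (logn p (pexp_prod f)))).
  by apply: eq_bigr => x _; rewrite logn_pexp_prod_val.
- by move=> p pp leNp; rewrite logn_pexp_prod_ge // gq0 // (leq_trans leBN leNp).
- by rewrite leq_max leqnn.
- exact: leqnn.
Qed.

Lemma sum_pexp_prod_split (G : nat -> R) N K : (N <= K)%N ->
  \sum_(f : {ffun primes_below N.+1 -> 'I_K.+1}) G (pexp_prod f) =
  \sum_(1 <= d < N.+1) G d +
  \sum_(f : {ffun primes_below N.+1 -> 'I_K.+1} | (N.+1 <= pexp_prod f)%N)
    G (pexp_prod f).
Proof.
move=> leNK.
rewrite (bigID (fun f => (pexp_prod f < N.+1)%N)) /=; congr (_ + _); last first.
  by apply: eq_bigl => f; rewrite -leqNgt.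
have inord_big (f : {ffun primes_below N.+1 -> 'I_K.+1}) :
    (N.+1 <= pexp_prod f)%N -> (inord (pexp_prod f) : 'I_N.+1) = ord0.
  by move=> ltNf; rewrite /inord /insubd insubN // -leqNgt.
rewrite big_geq_mkord; symmetry.
pose exps (d : 'I_N.+1) : {ffun primes_below N.+1 -> 'I_K.+1} :=
  [ffun x => inord (logn (val (val x)) d)].
rewrite (reindex_onto (fun f => (inord (pexp_prod f) : 'I_N.+1)) exps) /=.
  apply: eq_big => f; case: (ltnP (pexp_prod f) N.+1) => ltfN.
  - rewrite inordK // pexp_prod_gt0 /=; apply/eqP/ffunP => x.
    by rewrite ffunE inordK // logn_pexp_prod_val inord_val.
  - by rewrite inord_big.
  - by rewrite inordK.
  - by rewrite inord_big.
move=> d /= d0; apply: val_inj => /=.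
suff ->: pexp_prod (exps d) = d by rewrite inordK.
apply: eqn_from_log; [exact: pexp_prod_gt0 | exact: d0 | move=> q].
have [qp|qN] := boolP (prime q); last by rewrite !logn_nonprime.
have [ltqN|leNq] := ltnP q N.+1; last first.
  by rewrite logn_pexp_prod_ge // ltn_log0 // (leq_trans (ltn_ord d) leNq).
pose x : primes_below N.+1 := exist _ (Ordinal ltqN) qp.
rewrite (_ : q = val (val x)) // logn_pexp_prod_val ffunE inordK //.
rewrite /=; have := ltn_logl q d0; have := ltn_ord d; lia.
Qed.

Lemma ler_sum_subset (I : finType) (P Q : pred I) (F : I -> R) :
  (forall i, P i -> Q i) -> (forall i, 0 <= F i) ->
  \sum_(i | P i) F i <= \sum_(i | Q i) F i.
Proof.
move=> PQ F0; rewrite [X in X <= _]big_mkcond [X in _ <= X]big_mkcond /=.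
by apply: ler_sum => i _; case: (boolP (P i)) => [/PQ -> //|_]; case: (Q i).
Qed.

Lemma sum_pexp_prod_tail_le (G : nat -> R) N K : exists Q : nat,
  \sum_(f : {ffun primes_below N -> 'I_K} | (N <= pexp_prod f)%N) `|G (pexp_prod f)|
  <= \sum_(N <= d < Q) `|G d|.
Proof.
set top := (\prod_(x : primes_below N) (val (val x)) ^ K)%N.
exists top.+1.
pose h (f : {ffun primes_below N -> 'I_K}) : 'I_top.+1 := inord (pexp_prod f).
have hK (f : {ffun primes_below N -> 'I_K}) : h f = pexp_prod f :> nat.
  by rewrite inordK // ltnS pexp_prod_le.
rewrite (eq_bigr (fun f => `|G (h f)|)); last by move=> f _; rewrite hK.
rewrite -(big_imset (fun y : 'I_top.+1 => `|G y|) (h := h)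
          (A := [pred f | (N <= pexp_prod f)%N])) /=; last first.
  by move=> f1 f2 _ _ eq_h; apply: pexp_prod_inj; rewrite -!hK eq_h.
rewrite big_geq_mkord.
by apply: ler_sum_subset => // y /imsetP [f Nf ->]; rewrite hK.
Qed.

Lemma expand_prod_local_sums B G gq M K : euler_factors B G gq ->
  (B <= M.+1)%N -> (M <= K)%N ->
  \prod_(p < M.+1 | prime p) \sum_(a < K.+1) gq p a =
  \sum_(1 <= d < M.+1) G d +
  \sum_(f : {ffun primes_below M.+1 -> 'I_K.+1} | (M.+1 <= pexp_prod f)%N)
    G (pexp_prod f).
Proof.
by move=> Gf leBM leMK; rewrite (prod_local_sums_pexp _ _ _ _ _ Gf) // sum_pexp_prod_split.
Qed.

End EulerExpansion.

Arguments euler_factors_norm {R B G gq}.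
Arguments expand_prod_local_sums {R B G gq} M K.

Section EulerProduct.
Variable R : realType.

Lemma cvg_big_prod (I : Type) (r : seq I) (P : pred I) (F : I -> nat -> R) (l : I -> R) :
  (forall i, P i -> F i n @[n --> \oo] --> l i) ->
  \prod_(i <- r | P i) F i K @[K --> \oo] --> \prod_(i <- r | P i) l i.
Proof.
move=> Fl; elim: r => [|i r IH].
  under eq_fun do rewrite big_nil; rewrite big_nil; exact: cvg_cst.
under eq_fun do rewrite big_cons; rewrite big_cons.
by case: (boolP (P i)) => // Pi; apply: cvgM (Fl i Pi) IH.
Qed.

Lemma sum_inv_sqr_le (N : nat) :
  \sum_(k < N.+1 | (0 < k)%N) ((k%:R : R) ^+ 2)^-1 <= 2 - 2 / N.+1%:R.
Proof.
elim: N => [|N IH].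
  by rewrite big_mkcond big_ord_recr big_ord0 /= add0r divr1 subrr.
rewrite big_mkcond big_ord_recr /= -big_mkcond /=.
apply: le_trans (lerD IH (lexx _)) _.
have x0 : (0 : R) <= N%:R by rewrite ler0n.
rewrite -[N.+1.+1%:R]natr1 -[N.+1%:R]natr1 -subr_ge0.
set x := (N%:R : R).
have -> : 2 - 2 / (x + 1 + 1) - (2 - 2 / (x + 1) + ((x + 1) ^+ 2)^-1) =
   x / ((x + 1) ^+ 2 * (x + 2)).
  by field; apply/andP; split; rewrite lt0r_neq0 // ?ltr_wpDl //; lra.
by apply: divr_ge0 => //; apply: mulr_ge0; [apply: exprn_ge0|]; lra.
Qed.

Lemma sum_prime_inv_sqr_le (N : nat) :
  \sum_(p < N | prime p) ((p%:R : R) ^+ 2)^-1 <= 2.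
Proof.
case: N => [|M]; first by rewrite big_ord0.
apply: le_trans (_ : _ <= \sum_(k < M.+1 | (0 < k)%N) ((k%:R : R) ^+ 2)^-1) _.
  apply: (ler_sum_subset R); first by move=> i /prime_gt0.
  by move=> i; rewrite invr_ge0 exprn_ge0.
by apply: le_trans (sum_inv_sqr_le M) _; rewrite gerBl divr_ge0.
Qed.

Lemma prod_prime_1Dinv_sqr_le (c : R) N : 0 <= c ->
  \prod_(p < N | prime p) (1 + c / ((p%:R : R) ^+ 2)) <= expR (2 * c).
Proof.
move=> c0.
apply: le_trans (_ : _ <= \prod_(p < N | prime p) expR (c / ((p%:R : R) ^+ 2))) _.
  apply: ler_prod => p pp; rewrite expR_ge1Dx andbT.
  by rewrite addr_ge0 // divr_ge0 // exprn_ge0.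
rewrite -expR_sum ler_expR.
under eq_bigr do rewrite mulrC.
by rewrite -mulr_suml ler_wpM2r // sum_prime_inv_sqr_le.
Qed.

Lemma nondecreasing_sum_nat1 (h : nat -> R) : (forall d, 0 <= h d) ->
  {homo (fun N => \sum_(1 <= d < N) h d) : m n / (m <= n)%N >-> m <= n}.
Proof.
move=> h0 [|m] n lemn /=; first by rewrite big_geq // sumr_ge0.
by rewrite (@big_cat_nat _ _ _ m.+1 1 n) //= lerDl sumr_ge0.
Qed.

Variables (g : nat -> R) (gp : nat -> nat -> R) (L : nat -> R) (B : nat) (c : R).
Hypothesis c_ge0 : 0 <= c.
Hypothesis g_factors : euler_factors R B g gp.
Hypothesis gp_cvg : forall p, prime p -> \sum_(a < K) gp p a @[K --> \oo] --> L p.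
Hypothesis gp_norm_le : forall p K, prime p ->
  \sum_(a < K) `|gp p a| <= 1 + c / ((p%:R : R) ^+ 2).

Let sum_g N : R := \sum_(1 <= d < N) g d.
Let sum_norm_g N : R := \sum_(1 <= d < N) `|g d|.

Lemma sum_norm_g_le N : sum_norm_g N <= expR (2 * c).
Proof.
pose M := maxn N B.
apply: le_trans (_ : sum_norm_g N <= sum_norm_g M.+1) _.
  by apply: nondecreasing_sum_nat1 => //; apply: leq_trans (leq_maxl N B) (leqnSn _).
have leBM : (B <= M.+1)%N by apply: leq_trans (leq_maxr N B) (leqnSn _).
apply: le_trans (_ : _ <= \prod_(p < M.+1 | prime p) \sum_(a < M.+1) `|gp p a|) _.
  rewrite (expand_prod_local_sums _ _ (euler_factors_norm g_factors)) //.
  by rewrite lerDl sumr_ge0.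
apply: le_trans (prod_prime_1Dinv_sqr_le c M.+1 c_ge0).
by apply: ler_prod => p pp; rewrite gp_norm_le // andbT sumr_ge0.
Qed.

Lemma cvg_sum_norm_g : cvgn sum_norm_g.
Proof.
apply: nondecreasing_is_cvgn; first exact: nondecreasing_sum_nat1.
by exists (expR (2 * c)) => _ [n _ <-]; apply: sum_norm_g_le.
Qed.

(* [|g| + g] has nonnegative terms and partial sums at most [2 sum |g|]. *)
Lemma cvg_sum_g : cvgn sum_g.
Proof.
pose sum_pos N := \sum_(1 <= d < N) (`|g d| + g d).
have cvg_pos : cvgn sum_pos.
  apply: nondecreasing_is_cvgn.
    by apply: nondecreasing_sum_nat1 => d; rewrite -lerBlDr sub0r -normrN ler_norm.
  exists (2 * expR (2 * c)) => _ [n _ <-].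
  apply: le_trans (_ : sum_pos n <= 2 * sum_norm_g n) _.
    rewrite /sum_pos /sum_norm_g mulr_sumr; apply: ler_sum => d _.
    by rewrite mulr2n mulrDl mul1r lerD2l ler_norm.
  by rewrite ler_wpM2l // sum_norm_g_le.
have -> : sum_g = (fun N => sum_pos N - sum_norm_g N).
  apply: funext => N; rewrite /sum_g /sum_pos /sum_norm_g -sumrB.
  by apply: eq_bigr => d _; rewrite addrAC subrr add0r.
exact: is_cvgB cvg_pos cvg_sum_norm_g.
Qed.

(* The partial Euler product over [p <= M] differs from [sum_g M.+1] by the
   sum over integers [> M] with prime factors [<= M], bounded by a tail of
   the absolutely convergent series. *)
Lemma prod_L_sum_g_dist M : (B <= M.+1)%N ->
  `|\prod_(p < M.+1 | prime p) L p - sum_g M.+1| <= limn sum_norm_g - sum_norm_g M.+1.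
Proof.
move=> leBM.
have cvg_partial : \prod_(p < M.+1 | prime p) \sum_(a < K) gp p a @[K --> \oo] -->
                   \prod_(p < M.+1 | prime p) L p.
  by apply: cvg_big_prod => p pp; apply: gp_cvg.
apply: (ler_cvg_to (cvg_norm (cvgB cvg_partial (cvg_cst (sum_g M.+1))))
                   (cvg_cst (limn sum_norm_g - sum_norm_g M.+1))).
near=> K.
have leMK : (M.+1 <= K)%N by near: K; apply: nbhs_infty_ge.
change (`|\prod_(p < M.+1 | prime p) \sum_(a < K) gp p a - sum_g M.+1|
  <= limn sum_norm_g - sum_norm_g M.+1).
rewrite -(prednK (leq_trans (ltn0Sn M) leMK)).
rewrite (expand_prod_local_sums _ _ g_factors) //; last first.
  by rewrite -ltnS prednK // (leq_trans (ltn0Sn M)).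
rewrite /sum_g addrAC subrr add0r.
have [Q tail_le] := sum_pexp_prod_tail_le R g M.+1 K.-1.+1.
apply: le_trans (ler_norm_sum _ _ _) _; apply: le_trans tail_le _.
have sum_le_lim := nondecreasing_cvgn_le (nondecreasing_sum_nat1 _ (fun d => normr_ge0 (g d)))
  cvg_sum_norm_g.
have [leMQ|ltQM] := leqP M.+1 Q; last first.
  by rewrite big_geq ?(ltnW ltQM) // subr_ge0 sum_le_lim.
have := sum_le_lim Q; rewrite /sum_norm_g (@big_cat_nat _ _ _ M.+1 1 Q) //=.
lra.
Unshelve. all: by end_near.
Qed.

Lemma euler_product :
  \prod_(p < N | prime p) L p @[N --> \oo] --> limn sum_g.
Proof.
pose P N := \prod_(p < N | prime p) L p.
have dist_cvg0 : (P - sum_g) @ \oo --> 0.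
  apply/norm_cvg0P.
  apply: (@squeeze_cvgr _ _ _ _ (fun _ => 0) (fun N => limn sum_norm_g - sum_norm_g N));
    last 2 first.
  - exact: cvg_cst.
  - rewrite -(subrr (limn sum_norm_g)); apply: cvgB; [exact: cvg_cst|exact: cvg_sum_norm_g].
  near=> N.
  have ltBN : (B < N)%N by near: N; apply: nbhs_infty_gt.
  have N0 : (0 < N)%N by apply: leq_ltn_trans ltBN.
  rewrite normr_ge0 /= -(prednK N0).
  by apply: prod_L_sum_g_dist; rewrite prednK // ltnW.
have -> : (fun N => \prod_(p < N | prime p) L p) = (P - sum_g) + sum_g.
  by apply: funext => N; rewrite /= subrK.
by rewrite -[limn sum_g]add0r; apply: cvgD dist_cvg0 cvg_sum_g.
Unshelve. all: by end_near.
Qed.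

End EulerProduct.

Arguments cvg_sum_g {R g gp B} c.
Arguments euler_product {R g gp L B} c.

Section LocalFactors.
Variable R : realFieldType.

Definition mobius_local (b : nat) : R :=
  if b == 0%N then 1 else if b == 1%N then -1 else 0.

(* The factor at [p] of [[n | ij] mu(j) / (i^2 j phi(ij))], where [e], [a],
   [b] are the [p]-adic valuations of [n], [i], [j]. *)
Definition term_local (e p a b : nat) : R :=
  ((e <= a + b)%N%:R * mobius_local b) /
  ((p ^ (2 * a) * p ^ b * totient_local p (a + b))%N%:R).

Definition inner_local (e p a : nat) : R := term_local e p a 0 + term_local e p a 1.

Definition inner_local0 (p : nat) : R := inner_local 0 p 0.

Definition r_local (e p : nat) : R :=
  if e == 0%N then 1 else
  - ((p%:R : R) ^ (4%:Z - 3%:Z * e%:Z)) / ((p%:R : R) ^+ 3 - p%:R - 1).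

Definition rS_local (e p : nat) : R :=
  (1 - (p%:R : R) / ((p%:R : R) ^+ 3 - 1)) * r_local e p.

Lemma natr_prime_facts (p : nat) : prime p ->
  let P := (p%:R : R) in
  [/\ 2 <= P, P != 0, P - 1 != 0, P ^+ 3 - 1 != 0 & P ^+ 3 - P - 1 != 0].
Proof.
move=> pp P; have P2 : 2 <= P by rewrite /P (ler_nat R 2 p) prime_gt1.
split=> //; apply: lt0r_neq0; rewrite ?exprS ?expr0 ?mulr1; nra.
Qed.

Lemma term_local00 e p : term_local e p 0 0 = (e == 0%N)%:R.
Proof. by rewrite /term_local /mobius_local /= muln1 divr1 mulr1 leqn0. Qed.

Lemma term_localS0 e p a : (0 < p)%N -> term_local e p a.+1 0 =
  (e <= a.+1)%N%:R / ((p%:R : R) ^+ (2 * a.+1) * (((p%:R : R) - 1) * (p%:R) ^+ a)).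
Proof.
move=> p0; rewrite /term_local /mobius_local addn0 mulr1 !natrM !natrX.
by rewrite -subn1 natrB // expr0 mulr1.
Qed.

Lemma term_local1 e p a : (0 < p)%N -> term_local e p a 1 =
  - (e <= a.+1)%N%:R /
    ((p%:R : R) ^+ (2 * a) * (p%:R) * (((p%:R : R) - 1) * (p%:R) ^+ a)).
Proof.
move=> p0; rewrite /term_local /mobius_local /= addn1 !natrM !natrX.
by rewrite -subn1 natrB // expr1 mulrN1 mulNr.
Qed.

Lemma term_local_ge2 e p a b : (2 <= b)%N -> term_local e p a b = 0.
Proof. by case: b => [|[|b]] // _; rewrite /term_local /mobius_local /= mulr0 mul0r. Qed.

Lemma inner_local_eq0 e p a : (a.+1 < e)%N -> inner_local e p a = 0.
Proof.
move=> ltae; rewrite /inner_local /term_local.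
rewrite (_ : (e <= a + 0)%N = false); last by apply/negbTE; lia.
by rewrite (_ : (e <= a + 1)%N = false) ?mul0r ?addr0 //; apply/negbTE; lia.
Qed.

Lemma inner_localS e p k : prime p -> (e <= k.+1)%N ->
  inner_local e p k.+1 = ((p%:R + 1) / p%:R) * (((p%:R : R) ^+ 3)^-1) ^+ k.+1.
Proof.
move=> pp lek; have p0 := prime_gt0 pp.
have [_ Pn0 P1n0 _ _] := natr_prime_facts p pp.
rewrite /inner_local term_localS0 // term_local1 // lek (leq_trans lek (leqnSn _)) /=.
set P := (p%:R : R).
rewrite (_ : (2 * k.+1 = k + k + 2)%N); last by lia.
rewrite exprVn -exprM (_ : (3 * k.+1 = k + k + k + 3)%N); last by lia.
rewrite !exprD !exprS expr0 mulr1.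
have Pk0 : P ^+ k != 0 by apply: expf_neq0.
by field; rewrite Pn0 P1n0 Pk0.
Qed.

Lemma inner_local0E p : prime p -> inner_local0 p = 1 - ((p%:R : R) * (p%:R - 1))^-1.
Proof.
move=> pp; have [_ Pn0 P1n0 _ _] := natr_prime_facts p pp.
rewrite /inner_local0 /inner_local term_local00 term_local1 ?prime_gt0 //= expr0 !mul1r.
by field; rewrite Pn0 P1n0.
Qed.

Lemma inv_natr_prime_pred_le (p : nat) : prime p ->
  0 < ((p%:R : R) * (p%:R - 1))^-1 <= 2^-1.
Proof.
move=> pp; have [P2 _ _ _ _] := natr_prime_facts p pp.
have le2 : 2 <= (p%:R : R) * (p%:R - 1) by nra.
by rewrite invr_gt0 (lt_le_trans _ le2) //= lef_pV2 ?posrE //; lra.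
Qed.

Lemma inner_local0_bounds p : prime p -> 2^-1 <= inner_local0 p <= 1.
Proof. by move=> pp; have := inv_natr_prime_pred_le p pp; rewrite inner_local0E //; lra. Qed.

Lemma inner_local0_gt0 p : prime p -> 0 < inner_local0 p.
Proof. by move=> pp; have := inner_local0_bounds p pp; lra. Qed.

Lemma inner_local0_neq0 p : prime p -> inner_local0 p != 0.
Proof. by move=> pp; rewrite lt0r_neq0 // inner_local0_gt0. Qed.

Lemma norm_inner_local0_le e p : prime p -> `|inner_local e p 0| <= inner_local0 p.
Proof.
move=> pp; have bnd := inv_natr_prime_pred_le p pp.
rewrite inner_local0E // /inner_local term_local00 term_local1 ?prime_gt0 //= expr0 !mul1r.
case: e => [|[|e]] /=.
- by rewrite mulNr ger0_norm; lra.
- by rewrite add0r mulNr normrN mul1r ger0_norm; lra.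
- by rewrite oppr0 mul0r addr0 normr0; lra.
Qed.

Lemma norm_div_le_inv (x Z W : R) : 0 <= x <= 1 -> 0 < Z -> 1 <= W ->
  `|x / (Z * W)| <= Z^-1.
Proof.
move=> /andP[x0 x1] Z0 W1.
have ZW : 0 < Z * W by apply: mulr_gt0 => //; lra.
rewrite ger0_norm; last by apply: divr_ge0 => //; apply: ltW.
by rewrite ler_pdivrMr // mulrA mulVf ?gt_eqF // mul1r; lra.
Qed.

Lemma norm_term_local0_le e p a : prime p -> `|term_local e p a 0| <= 1.
Proof.
move=> pp; have p1 := prime_gt1 pp.
have D0 : (0 < p ^ (2 * a) * p ^ 0 * totient_local p (a + 0))%N.
  by rewrite !muln_gt0 !expn_gt0 (ltnW p1) totient_local_gt0.
rewrite /term_local /mobius_local /= mulr1 ger0_norm ?divr_ge0 //.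
by rewrite ler_pdivrMr ?ltr0n // mul1r ler_nat (leq_trans (leq_b1 _) D0).
Qed.

Lemma norm_term_local1_le e p a : prime p ->
  `|term_local e p a 1| <= 2 / ((p%:R : R) ^+ 2).
Proof.
move=> pp; have [P2 _ _ _ _] := natr_prime_facts p pp.
rewrite term_local1 ?prime_gt0 // mulNr normrN.
set P := (p%:R : R) in P2 *.
rewrite (_ : P ^+ (2 * a) * P * ((P - 1) * P ^+ a) =
             (P * (P - 1)) * (P ^+ (2 * a) * P ^+ a)); last by ring.
have b01 : 0 <= ((e <= a.+1)%N%:R : R) <= 1 by rewrite ler0n /= lern1 leq_b1.
have PP1 : 0 < P * (P - 1) by apply: mulr_gt0; lra.
have PP2 : 1 <= P ^+ (2 * a) * P ^+ a.
  by rewrite -[1]mulr1; apply: ler_pM => //; apply: exprn_ege1; lra.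
apply: le_trans (norm_div_le_inv _ _ _ b01 PP1 PP2) _.
rewrite -[X in X <= _]div1r ler_pdivrMr; last by apply: mulr_gt0; lra.
have -> : 2 / P ^+ 2 * (P * (P - 1)) = 2 * (P - 1) / P by field; lra.
by rewrite ler_pdivlMr; lra.
Qed.

Lemma sum_norm_term_local_le e p a K : prime p ->
  \sum_(b < K) `|term_local e p a b| <= 1 + 2 / ((p%:R : R) ^+ 2).
Proof.
move=> pp; have h2 : 0 <= 2 / ((p%:R : R) ^+ 2) by rewrite divr_ge0 // exprn_ge0.
case: K => [|[|K]].
- by rewrite big_ord0; lra.
- by rewrite big_ord1; have := norm_term_local0_le e p a pp; lra.
rewrite !big_ord_recl big1 => [|b _]; last by rewrite term_local_ge2 ?normr0.
by rewrite addr0 lerD // ?norm_term_local0_le ?norm_term_local1_le.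
Qed.

Lemma norm_inner_localS_le e p a : prime p ->
  `|inner_local e p a.+1| <= 2 * (((p%:R : R) ^+ 2)^-1) ^+ a.+1.
Proof.
move=> pp; have p0 := prime_gt0 pp.
have [P2 _ _ _ _] := natr_prime_facts p pp.
rewrite /inner_local exprVn -exprM mulr2n mulrDl mul1r term_localS0 // term_local1 //.
set P := (p%:R : R) in P2 *.
have b01 k : 0 <= ((e <= k)%N%:R : R) <= 1 by rewrite ler0n /= lern1 leq_b1.
have PX0 k : 0 < P ^+ k by apply: exprn_gt0; lra.
have PX1 k : 1 <= (P - 1) * P ^+ k.
  by rewrite -[X in X <= _]mulr1; apply: ler_pM; rewrite ?exprn_ege1 //; lra.
apply: le_trans (ler_normD _ _) _; rewrite mulNr normrN -mulrA.
apply: lerD; apply: norm_div_le_inv; rewrite ?b01 ?PX0 ?PX1 //.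
by rewrite -[X in X <= _]mulr1; apply: ler_pM; rewrite ?PX1 //; lra.
Qed.

(* From [a = max e 1] on, the terms form a geometric series of ratio [p^-3]. *)
Lemma inner_local_series_value e p : prime p ->
  \sum_(a < maxn e 1) inner_local e p a +
  ((p%:R + 1) / p%:R) * ((((p%:R : R) ^+ 3)^-1) ^+ maxn e 1 / (1 - ((p%:R : R) ^+ 3)^-1))
  = rS_local e p.
Proof.
move=> pp; have p0 := prime_gt0 pp.
have [_ Pn0 P1n0 P3n0 P4n0] := natr_prime_facts p pp.
set P := (p%:R : R) in Pn0 P1n0 P3n0 P4n0 *.
rewrite !exprS expr0 !mulr1 in P3n0 P4n0.
case: e => [|[|k]].
- rewrite big_ord1 /inner_local term_local00 term_local1 // /rS_local /r_local /=.
  rewrite !exprS !expr0 !mulr1 !mul1r -/P.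
  by field; apply/and3P.
- rewrite big_ord1 /inner_local term_local00 term_local1 // /rS_local /r_local /=.
  rewrite (_ : 4%:Z - 3%:Z * 1%:Z = 1) // expr1z !exprS !expr0 !mulr1 !mul1r -/P.
  by field; apply/and4P.
rewrite (_ : maxn k.+2 1 = k.+2) // big_ord_recr /= big1 => [|i _]; last first.
  by apply: inner_local_eq0; have := ltn_ord i; lia.
rewrite add0r /inner_local term_local1 // /term_local /mobius_local /=.
rewrite (_ : (k.+2 <= k.+1 + 0)%N = false); last by lia.
rewrite mul0r mul0r add0r leqnn /rS_local /r_local /=.
rewrite (_ : 4%:Z - 3%:Z * (k.+2)%:Z = Negz (3 * k + 1)); last by rewrite NegzE; lia.
rewrite /exprz -/P (_ : (2 * k.+1 = k + k + 2)%N); last by lia.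
rewrite exprVn -exprM (_ : (3 * k.+2 = k + k + k + 6)%N); last by lia.
rewrite (_ : ((3 * k + 1).+1 = k + k + k + 2)%N); last by lia.
rewrite !exprD !exprS !expr0 !mulr1.
have Pk0 : P ^+ k != 0 by apply: expf_neq0.
by field; rewrite Pk0 P3n0 P4n0 Pn0 P1n0.
Qed.

End LocalFactors.

Section LocalSeries.
Variable R : realType.

Lemma cvg_sum_geometric_tail (u : nat -> R) (m : nat) (c x : R) : 0 <= x < 1 ->
  (forall a, (m <= a)%N -> u a = c * x ^+ a) ->
  \sum_(a < K) u a @[K --> \oo] --> \sum_(a < m) u a + c * (x ^+ m / (1 - x)).
Proof.
move=> /andP[x0 x1] u_geo.
rewrite -(cvg_shiftn m).
have -> : [sequence \sum_(a < n + m) u a]_n =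
          (fun n => \sum_(a < m) u a + c * series (geometric (x ^+ m) x) n).
  apply: funext => n /=.
  rewrite -!(big_mkord xpredT) (@big_cat_nat _ _ _ m 0 (n + m)) ?leq_addl //=.
  congr (_ + _); rewrite addnC -geometric_partial_tail mulr_sumr.
  rewrite big_nat_cond [RHS]big_nat_cond.
  by apply: eq_bigr => a /andP[/andP[lema _] _]; rewrite u_geo.
apply: cvgD; first exact: cvg_cst.
by apply: cvgMl_tmp; apply: cvg_geometric_series; rewrite ger0_norm.
Qed.

Lemma cvg_sum_inner_local e p : prime p ->
  \sum_(a < K) inner_local R e p a @[K --> \oo] --> rS_local R e p.
Proof.
move=> pp; have [P2 _ _ _ _] := natr_prime_facts R p pp.
have x01 : 0 <= ((p%:R : R) ^+ 3)^-1 < 1.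
  rewrite invr_ge0 exprn_ge0 ?(le_trans _ P2) //= invf_lt1; last first.
    by rewrite exprn_gt0 // (lt_le_trans _ P2).
  by rewrite !exprS expr0 mulr1; nra.
rewrite -inner_local_series_value //; apply: cvg_sum_geometric_tail x01 _.
by move=> [|k]; rewrite geq_max ?andbF // => /andP[lek _]; rewrite inner_localS.
Qed.

Lemma cvg_sum_term_local e p a :
  \sum_(b < K) term_local R e p a b @[K --> \oo] --> inner_local R e p a.
Proof.
apply: cvg_near_cst; near=> K.
have leK : (2 <= K)%N by near: K; apply: nbhs_infty_ge.
rewrite -(subnK leK) addn2 !big_ord_recl big1 ?addr0 // => b _.
exact: term_local_ge2.
Unshelve. all: by end_near.
Qed.

End LocalSeries.

Section Multiplicativity.
Variable R : realFieldType.

Lemma mobius_prime_ord j N : (0 < j)%N -> (j < N)%N ->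
  ((mobius j)%:~R : R) = \prod_(p < N | prime p) mobius_local R (logn p j).
Proof.
move=> j0 ltjN.
rewrite (@big_prime_ord_primes R 1 *%R j N (fun p => mobius_local R (logn p j))) //;
  first last.
- by move=> p pp ndvd; rewrite logn_coprime // prime_coprime.
- by move=> p pp /(dvdn_leq j0) lepj; apply: leq_ltn_trans ltjN.
rewrite /mobius j0 /=; case: ifP => [sqfree|].
  rewrite intr_sign (eq_big_seq (fun _ => -1)) => [|p pj]; last first.
    by rewrite /mobius_local (eqP (allP sqfree p pj)).
  by elim: (primes j) => [|q s IH]; rewrite ?big_nil ?big_cons //= exprS IH.
move/negbT/allPn => [p pj logn_ne1].
apply/esym/eqP; rewrite prodf_seq_eq0; apply/hasP; exists p => //=.
by move: pj logn_ne1; rewrite -logn_gt0 /mobius_local; case: (logn p j) => [|[|k]].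
Qed.

Lemma dvdn_prime_ord n m N : (0 < n)%N -> (0 < m)%N -> (n < N)%N ->
  ((n %| m)%N%:R : R) = \prod_(p < N | prime p) (logn p n <= logn p m)%N%:R.
Proof.
move=> n0 m0 ltnN.
have [p /andP[pp ltmn]|no_p] := pickP (fun p : 'I_N => prime p && (logn p m < logn p n)%N).
  rewrite (bigD1 p) //= leqNgt ltmn mul0r.
  have [/(dvdn_lognP _ _ n0 m0)/(_ p pp)|//] := boolP (n %| m)%N.
  by rewrite leqNgt ltmn.
have lelog p : prime p -> (logn p n <= logn p m)%N.
  move=> pp; have [ltpN|leNp] := ltnP p N; last by rewrite ltn_log0 // (leq_trans ltnN).
  by have := no_p (Ordinal ltpN); rewrite /= pp /= => /negbT; rewrite -leqNgt.
rewrite (introT (dvdn_lognP _ _ n0 m0) lelog) big1 // => p pp.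
by rewrite lelog.
Qed.

Lemma term_denom_prime_ord i j N : (0 < i)%N -> (0 < j)%N -> (i < N)%N -> (j < N)%N ->
  ((i ^ 2 * j * totient (i * j))%N%:R : R) =
  \prod_(p < N | prime p)
     ((p ^ (2 * logn p i) * p ^ logn p j * totient_local p (logn p i + logn p j))%N%:R).
Proof.
move=> i0 j0 ltiN ltjN.
have ltpN m : (0 < m)%N -> (m < N)%N -> forall p, prime p -> (p %| m)%N -> (p < N)%N.
  by move=> m0 ltmN p pp /(dvdn_leq m0) lepm; apply: leq_ltn_trans ltmN.
rewrite -natr_prod; congr (_%:R); rewrite !big_split /=; congr (_ * _ * _)%N.
- rewrite {1}(@prod_prime_ord_logn (i ^ 2) N) ?expn_gt0 ?i0 //; last first.
    by move=> p pp; rewrite Euclid_dvdX // => /andP[/(ltpN _ i0 ltiN p pp)].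
  by apply: eq_bigr => p _; rewrite lognX mulnC.
- exact: prod_prime_ord_logn (ltpN _ j0 ltjN).
- rewrite (@totient_prime_ord (i * j) N) ?muln_gt0 ?i0 ?j0 //; last first.
    move=> p pp; rewrite Euclid_dvdM // => /orP[].
    + exact: ltpN i0 ltiN p pp.
    + exact: ltpN j0 ltjN p pp.
  by apply: eq_bigr => p _; rewrite lognM.
Qed.

End Multiplicativity.

Lemma is_cvg_prod_prime_01 (R : realType) (F : nat -> R) :
  (forall p, prime p -> 0 <= F p <= 1) ->
  cvgn (fun N => \prod_(p < N | prime p) F p).
Proof.
move=> F01; have F0 p : prime p -> 0 <= F p by move=> pp; have /andP[] := F01 p pp.
apply: nonincreasing_is_cvgn => [m k lemk /=|].
  rewrite -!(big_mkord (fun p => prime p)) (@big_cat_nat _ _ _ m 0 k) //=.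
  rewrite ler_piMr ?prodr_ge0 ?prodr_ile1 // => p pp; exact: F01.
by exists 0 => _ [N _ <-]; apply: prodr_ge0 => p /F0.
Qed.

Section InnerSum.
Variable R : realType.

Definition inner_sum (n i : nat) : R :=
  limn (fun M => \sum_(1 <= j < M | (n %| i * j)%N) term R i j).

Definition inner_const : R :=
  limn (fun N => \prod_(p < N | prime p) inner_local0 R p).

(* The inner sum divided by [inner_const] (see [inner_sumE]). *)
Definition inner_ratio (n i : nat) : R :=
  \prod_(p < (i + n).+1 | prime p) (inner_local R (logn p n) p (logn p i) / inner_local0 R p).

Lemma term_prime_ord n i j N : (0 < n)%N -> (0 < i)%N -> (0 < j)%N ->
  (n < N)%N -> (i < N)%N -> (j < N)%N ->
  ((n %| i * j)%N%:R : R) * term R i j =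
  \prod_(p < N | prime p) term_local R (logn p n) p (logn p i) (logn p j).
Proof.
move=> n0 i0 j0 ltnN ltiN ltjN.
rewrite /term (@dvdn_prime_ord R n (i * j) N) ?muln_gt0 ?i0 ?j0 //.
rewrite (@mobius_prime_ord R j N) // (@term_denom_prime_ord R i j N) //.
rewrite /term_local prodf_div big_split /= mulrA; congr (_ * _ / _).
by apply: eq_bigr => p _; rewrite lognM.
Qed.

Lemma euler_factors_inner n i : (0 < n)%N -> (0 < i)%N ->
  euler_factors R (i + n).+1 (fun j => ((n %| i * j)%N%:R : R) * term R i j)
    (fun p b => term_local R (logn p n) p (logn p i) b).
Proof.
move=> n0 i0; split=> [j N j0 leN ltjN | p pp lep].
  by apply: term_prime_ord => //; apply: leq_trans leN; rewrite ltnS ?leq_addl ?leq_addr.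
rewrite (@ltn_log0 p n) ?(@ltn_log0 p i) ?term_local00 //;
  by apply: leq_trans lep; rewrite ltnS ?leq_addl ?leq_addr.
Qed.

Lemma sum_dvdn_cond (n i M : nat) :
  \sum_(1 <= j < M | (n %| i * j)%N) term R i j =
  \sum_(1 <= j < M) ((n %| i * j)%N%:R : R) * term R i j.
Proof. by rewrite big_mkcond /=; apply: eq_bigr => j _; case: ifP; rewrite ?mul1r ?mul0r. Qed.

Lemma cvg_prod_inner_local n i : (0 < n)%N -> (0 < i)%N ->
  \prod_(p < N | prime p) inner_local R (logn p n) p (logn p i) @[N --> \oo] -->
  inner_sum n i.
Proof.
move=> n0 i0; rewrite /inner_sum (funext (sum_dvdn_cond n i)).
apply: (euler_product (L := fun p => inner_local R (logn p n) p (logn p i)) 2 (ler0n R 2)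
  (euler_factors_inner n i n0 i0)) => p *.
- exact: cvg_sum_term_local.
- exact: sum_norm_term_local_le.
Qed.

Lemma cvg_prod_inner_local0 :
  \prod_(p < N | prime p) inner_local0 R p @[N --> \oo] --> inner_const.
Proof.
apply: is_cvg_prod_prime_01 => p pp.
have := inner_local0_bounds R p pp; have := inner_local0_gt0 R p pp.
by move=> ? /andP[? ?]; apply/andP; split; lra.
Qed.

Lemma inner_ratio_widen n i N : (maxn i n < N)%N ->
  inner_ratio n i =
  \prod_(p < N | prime p) (inner_local R (logn p n) p (logn p i) / inner_local0 R p).
Proof.
move=> ltN; apply: (@big_prime_ord_widen R 1 *%R (maxn i n).+1 _ _
  (fun p => inner_local R (logn p n) p (logn p i) / inner_local0 R p)) => //.
- move=> p pp lep.
  rewrite (@ltn_log0 p i) ?(@ltn_log0 p n) ?divff ?inner_local0_neq0 //;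
    by apply: leq_trans lep; rewrite ltnS ?leq_maxl ?leq_maxr.
- by rewrite ltnS geq_max leq_addr leq_addl.
Qed.

Lemma inner_sumE n i : (0 < n)%N -> (0 < i)%N -> inner_sum n i = inner_const * inner_ratio n i.
Proof.
move=> n0 i0; apply: (cvg_unique _ (cvg_prod_inner_local n i n0 i0)) => //.
have eq_prod : {near \oo, (fun N => (\prod_(p < N | prime p) inner_local0 R p) * inner_ratio n i)
    =1 (fun N => \prod_(p < N | prime p) inner_local R (logn p n) p (logn p i))}.
  near=> N; have ltN : (maxn i n < N)%N by near: N; apply: nbhs_infty_gt.
  rewrite /= (inner_ratio_widen n i N ltN) -big_split /=; apply: eq_bigr => p pp.
  by rewrite mulrC divfK // inner_local0_neq0.
apply: cvg_trans (near_eq_cvg eq_prod) _.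
exact: cvgMr_tmp cvg_prod_inner_local0.
Unshelve. all: by end_near.
Qed.

End InnerSum.

Section OuterSum.
Variable R : realType.

Definition even_weight (ev : bool) (i : nat) : R := if ev then (2 %| i)%N%:R else 1.

Definition even_weight_local (ev : bool) (p a : nat) : R :=
  if ev && (p == 2%N) && (a == 0%N) then 0 else 1.

Definition outer_local (n : nat) (ev : bool) (p a : nat) : R :=
  even_weight_local ev p a * (inner_local R (logn p n) p a / inner_local0 R p).

Definition outer_removed (n : nat) (ev : bool) (p : nat) : R :=
  if ev && (p == 2%N) then inner_local R (logn p n) p 0 else 0.

Definition outer_factor (n : nat) (ev : bool) (p : nat) : R :=
  (rS_local R (logn p n) p - outer_removed n ev p) / inner_local0 R p.

Lemma even_weight_prime_ord ev i N : (0 < i)%N -> (2 < N)%N ->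
  even_weight ev i = \prod_(p < N | prime p) even_weight_local ev p (logn p i).
Proof.
move=> i0 ltN2; case: ev; last by rewrite big1.
rewrite (bigD1 (Ordinal ltN2)) //= big1 ?mulr1 => [|p /andP[_ neq_p2]]; last first.
  rewrite /even_weight_local (_ : (nat_of_ord p == 2%N) = false) //.
  by apply/negbTE; apply: contra neq_p2 => /eqP eq_p2; apply/eqP; apply: val_inj.
have -> : (2 %| i)%N = (logn 2 i != 0%N) by rewrite -lt0n logn_gt0 mem_primes i0.
by rewrite /even_weight_local /=; case: (logn 2 i == 0%N).
Qed.

Lemma norm_outer_local0_le n ev p : prime p -> `|outer_local n ev p 0| <= 1.
Proof.
move=> pp; have a0 := inner_local0_gt0 R p pp.
rewrite /outer_local normrM -[1]mul1r; apply: ler_pM => //.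
  by rewrite /even_weight_local; case: ifP; rewrite ?normr0 ?normr1.
rewrite normrM normfV (ger0_norm (ltW a0)) ler_pdivrMr // mul1r.
exact: norm_inner_local0_le.
Qed.

Lemma norm_outer_localS_le n ev p a : prime p ->
  `|outer_local n ev p a.+1| <= 4 * ((p%:R : R) ^+ 2)^-1 ^+ a.+1.
Proof.
move=> pp; have a0 := inner_local0_gt0 R p pp.
have /andP[a_ge _] := inner_local0_bounds R p pp.
rewrite /outer_local /even_weight_local andbF mul1r normrM normfV.
rewrite (ger0_norm (ltW a0)) ler_pdivrMr //.
apply: le_trans (norm_inner_localS_le R _ _ _ pp) _.
have : 0 <= ((p%:R : R) ^+ 2)^-1 ^+ a.+1 by rewrite exprn_ge0 // invr_ge0 exprn_ge0.
nra.
Qed.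

Lemma sum_norm_outer_local_le n ev p K : prime p ->
  \sum_(a < K) `|outer_local n ev p a| <= 1 + 8 / ((p%:R : R) ^+ 2).
Proof.
move=> pp; have [P2 _ _ _ _] := natr_prime_facts R p pp.
set y := ((p%:R : R) ^+ 2)^-1.
have y0 : 0 < y by rewrite invr_gt0 exprn_gt0 //; lra.
have y4 : y <= 4^-1 by rewrite /y lef_pV2 ?posrE ?exprn_gt0 ?expr2; nra.
case: K => [|K]; first by rewrite big_ord0; lra.
rewrite big_ord_recl lerD ?norm_outer_local0_le //.
apply: le_trans (_ : \sum_(a < K) 4 * y * (1 * y ^+ a) <= _).
  by apply: ler_sum => a _; rewrite mul1r -mulrA -exprS norm_outer_localS_le.
rewrite -mulr_sumr.
have y1 : `|y| < 1 by rewrite gtr0_norm //; lra.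
have : \sum_(a < K) 1 * y ^+ a <= 2.
  have -> : \sum_(a < K) 1 * y ^+ a = series (geometric 1 y) K.
    by rewrite /series /= big_mkord.
  apply: le_trans (geometric_le_lim K ler01 y0 y1) _.
  by rewrite ler_pdivrMr; lra.
have : 0 <= \sum_(a < K) 1 * y ^+ a by apply: sumr_ge0 => a _; rewrite mul1r exprn_ge0 ?ltW.
rewrite -/y; nra.
Qed.

Lemma euler_factors_outer n ev : (0 < n)%N ->
  euler_factors R n.+3 (fun i => even_weight ev i * inner_ratio R n i) (outer_local n ev).
Proof.
move=> n0; split=> [i N i0 leN ltiN | p pp lep].
  rewrite /outer_local big_split /= -even_weight_prime_ord //; last by lia.
  by rewrite -(inner_ratio_widen R n i N) // gtn_max ltiN; lia.
rewrite /outer_local /even_weight_local (_ : (p == 2%N) = false); last by apply/eqP; lia.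
by rewrite andbF mul1r (@ltn_log0 p n) ?divff ?inner_local0_neq0 //; lia.
Qed.

Lemma cvg_sum_outer_local n ev p : prime p ->
  \sum_(a < K) outer_local n ev p a @[K --> \oo] --> outer_factor n ev p.
Proof.
move=> pp.
have eq_sum : {near \oo, (fun K => (\sum_(a < K) inner_local R (logn p n) p a
      - outer_removed n ev p) / inner_local0 R p) =1
    (fun K => \sum_(a < K) outer_local n ev p a)}.
  near=> K; have K0 : (0 < K)%N by near: K; apply: nbhs_infty_ge.
  rewrite /= -(prednK K0) -!(big_mkord xpredT) !big_nat_recl //.
  rewrite /outer_local /even_weight_local /outer_removed.
  under [X in _ = _ + X]eq_bigr do rewrite andbF mul1r.
  rewrite -mulr_suml; case: (ev && (p == 2%N)) => /=.
    by rewrite mul0r add0r addrAC subrr add0r.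
  by rewrite subr0 mul1r mulrDl.
apply: cvg_trans (near_eq_cvg eq_sum) _.
by apply: cvgMr_tmp; apply: cvgB; [exact: cvg_sum_inner_local | exact: cvg_cst].
Unshelve. all: by end_near.
Qed.

Lemma cvg_prod_outer_factor n ev : (0 < n)%N ->
  \prod_(p < N | prime p) outer_factor n ev p @[N --> \oo] -->
  limn (fun N => \sum_(1 <= i < N) even_weight ev i * inner_ratio R n i).
Proof.
move=> n0; apply: (euler_product (L := outer_factor n ev) 8 (ler0n R 8)
  (euler_factors_outer n ev n0)) => p *.
- exact: cvg_sum_outer_local.
- exact: sum_norm_outer_local_le.
Qed.

Lemma is_cvg_sum_outer n ev : (0 < n)%N ->
  cvgn (fun N => \sum_(1 <= i < N) even_weight ev i * inner_ratio R n i).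
Proof.
move=> n0; apply: (cvg_sum_g 8 (ler0n R 8) (euler_factors_outer n ev n0)).
by move=> p K pp; apply: sum_norm_outer_local_le.
Qed.

(* [inner_local0 p * outer_factor p] is the local factor of the double sum. *)
Lemma cvg_outer_sum n ev : (0 < n)%N ->
  \sum_(1 <= i < N) even_weight ev i * inner_sum R n i @[N --> \oo] -->
  limn (fun N => \prod_(p < N | prime p) (rS_local R (logn p n) p - outer_removed n ev p)).
Proof.
move=> n0.
set l2 := limn (fun N => \sum_(1 <= i < N) even_weight ev i * inner_ratio R n i).
have -> : (fun N => \prod_(p < N | prime p) (rS_local R (logn p n) p - outer_removed n ev p))
    = (fun N => (\prod_(p < N | prime p) inner_local0 R p) *
                \prod_(p < N | prime p) outer_factor n ev p).
  apply: funext => N; rewrite -big_split /=; apply: eq_bigr => p pp.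
  by rewrite /outer_factor mulrC divfK // inner_local0_neq0.
rewrite (cvg_lim _ (cvgM (cvg_prod_inner_local0 R) (cvg_prod_outer_factor n ev n0))) //.
have -> : (fun N => \sum_(1 <= i < N) even_weight ev i * inner_sum R n i) =
          (fun N => inner_const R * \sum_(1 <= i < N) even_weight ev i * inner_ratio R n i).
  apply: funext => N; rewrite mulr_sumr big_nat_cond [RHS]big_nat_cond.
  by apply: eq_bigr => i /andP[/andP[i1 _] _]; rewrite inner_sumE // mulrCA.
exact: cvgMl_tmp (is_cvg_sum_outer n ev n0).
Qed.

End OuterSum.

Section MainTheorem.
Variable R : realType.

Definition S_partial (N : nat) : R :=
  \prod_(p < N | prime p) (1 - (p%:R : R) / ((p%:R : R) ^+ 3 - 1)).

Lemma cvg_S_partial : S_partial N @[N --> \oo] --> S_const R.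
Proof.
apply: (@is_cvg_prod_prime_01 R (fun p => 1 - (p%:R : R) / ((p%:R : R) ^+ 3 - 1))) => p pp.
have [P2 _ _ _ _] := natr_prime_facts R p pp.
set P := (p%:R : R) in P2 *.
have le_cube : P + 1 <= P ^+ 3 - 1 by rewrite !exprS expr0 mulr1; nra.
have cube0 : 0 < P ^+ 3 - 1 by lra.
have : 0 <= P / (P ^+ 3 - 1) by apply: divr_ge0; lra.
have : P / (P ^+ 3 - 1) <= 1 by rewrite ler_pdivrMr // mul1r; lra.
by move=> ? ?; apply/andP; split; lra.
Qed.

Lemma prod_rS_local n N : (0 < n)%N -> (n < N)%N ->
  \prod_(p < N | prime p) rS_local R (logn p n) p = r_fun R n * S_partial N.
Proof.
move=> n0 ltnN; rewrite /rS_local big_split /= mulrC; congr (_ * _).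
rewrite (@big_prime_ord_primes R 1 *%R n N (fun p => r_local R (logn p n) p)) //.
- by apply: eq_big_seq => p; rewrite -logn_gt0 /r_local; case: (logn p n).
- by move=> p pp /(dvdn_leq n0) lepn; apply: leq_ltn_trans ltnN.
- by move=> p pp ndvd; rewrite logn_coprime // prime_coprime.
Qed.

Lemma outer_sum_limit n ev (k : R) : (0 < n)%N ->
  (forall N, (n < N)%N -> (2 < N)%N ->
     \prod_(p < N | prime p) (rS_local R (logn p n) p - outer_removed R n ev p) =
     k * \prod_(p < N | prime p) rS_local R (logn p n) p) ->
  limn (fun N => \sum_(1 <= i < N) even_weight R ev i * inner_sum R n i) =
  k * r_fun R n * S_const R.
Proof.
move=> n0 removed_k; rewrite (cvg_lim _ (cvg_outer_sum R n ev n0)) //.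
have eq_prod : {near \oo, (fun N => k * r_fun R n * S_partial N) =1
    (fun N => \prod_(p < N | prime p) (rS_local R (logn p n) p - outer_removed R n ev p))}.
  near=> N; have ltN : (maxn n 2 < N)%N by near: N; apply: nbhs_infty_gt.
  move: ltN; rewrite gtn_max => /andP[ltnN lt2N].
  by rewrite /= removed_k // prod_rS_local // mulrA.
apply: cvg_lim => //; apply: cvg_trans (near_eq_cvg eq_prod) _.
exact: cvgMl_tmp cvg_S_partial.
Unshelve. all: by end_near.
Qed.

Lemma outer_removed_eq0 n N : (0 < n)%N -> (4 %| n)%N -> (n < N)%N -> (2 < N)%N ->
  \prod_(p < N | prime p) (rS_local R (logn p n) p - outer_removed R n true p) =
  1 * \prod_(p < N | prime p) rS_local R (logn p n) p.
Proof.
move=> n0 dvd4n _ _; rewrite mul1r; apply: eq_bigr => p _.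
rewrite /outer_removed /=; case: eqP => [->|]; last by rewrite subr0.
rewrite inner_local_eq0 ?subr0 //.
by move: dvd4n; rewrite (_ : 4 = 2 ^ 2)%N // pfactor_dvdn.
Qed.

(* Only the factor at [p = 2] changes, and [5/7 - 1/2 = 3/10 * 5/7]. *)
Lemma outer_removed_odd n N : odd n -> (n < N)%N -> (2 < N)%N ->
  \prod_(p < N | prime p) (rS_local R (logn p n) p - outer_removed R n true p) =
  3%:R / 10%:R * \prod_(p < N | prime p) rS_local R (logn p n) p.
Proof.
move=> odd_n _ lt2N.
have logn2 : logn 2 n = 0%N by rewrite logn_coprime // prime_coprime // dvdn2 odd_n.
rewrite (bigD1 (Ordinal lt2N)) //= [in RHS](bigD1 (Ordinal lt2N)) //= [RHS]mulrA.
congr (_ * _).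
  rewrite /outer_removed /= logn2 -/(inner_local0 R 2) inner_local0E //.
  by rewrite /rS_local /r_local /= !exprS expr0 !mulr1; field.
apply: eq_bigr => p /andP[_ neq_p2].
rewrite /outer_removed (_ : (nat_of_ord p == 2%N) = false) ?andbF ?subr0 //.
by apply/negbTE; apply: contra neq_p2 => /eqP eq_p2; apply/eqP; apply: val_inj.
Qed.

End MainTheorem.

Theorem corollary4p3 (R : realType) (n : nat) (hn : (1 <= n)%N) :
  S1 R n = r_fun R n * S_const R /\
  (odd n -> S2' R n = 3%:R / 10%:R * r_fun R n * S_const R) /\
  ((4 %| n)%N -> S2' R n = r_fun R n * S_const R).
Proof.
have S1E : S1 R n = limn (fun N => \sum_(1 <= i < N) even_weight R false i * inner_sum R n i).
  by rewrite /S1; congr (limn _); apply: funext => N; apply: eq_bigr => i _; rewrite mul1r.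
have S2E : S2' R n = limn (fun N => \sum_(1 <= i < N) even_weight R true i * inner_sum R n i).
  rewrite /S2'; congr (limn _); apply: funext => N; rewrite big_mkcond /=; apply: eq_bigr => i _.
  by rewrite /even_weight; case: ifP; rewrite ?mul1r ?mul0r.
split; [|split].
- rewrite S1E (outer_sum_limit R n false 1 hn) ?mul1r // => N _ _.
  by rewrite mul1r; apply: eq_bigr => p _; rewrite subr0.
- move=> odd_n; rewrite S2E (outer_sum_limit R n true (3%:R / 10%:R) hn) // => N.
  exact: outer_removed_odd.
- move=> dvd4n; rewrite S2E (outer_sum_limit R n true 1 hn) ?mul1r // => N.
  exact: outer_removed_eq0.
Qed.
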